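(* Let $T$ be a balanced tree of height 3. Suppose that (1) for all $u\in V_2$, $|N(u)\cap V_1|=1$, and (2) for all $s\in V_1$, $|N(s)\cap V_2|\le 1$. Then $T$ is unmixed.
   Context: $N(v)=\{u:uv\in E\}$, $N(D)=\bigcup_{v\in D}N(v)$. A leaf is a vertex of degree 1; the height of a vertex is its minimum distance to a leaf; $V_k$ is the set of vertices of height $k$; the height of $T$ is the maximum height of a vertex; $T$ is balanced if no two adjacent vertices have the same height. A TD-set is $D$ with $N(D)=V$, minimal if no proper subset is a TD-set; $T$ is unmixed if all minimal TD-sets have the same size. *)

From mathcomp Require Import all_boot.
Set Implicit Arguments. Unset Strict Implicit. Unset Printing Implicit Defensive.

Section Graphs.
Variables (T : finType) (e : rel T).

Definition simple_graph : Prop := symmetric e /\ irreflexive e.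

Definition nbhd (v : T) : {set T} := [set u | e v u].
Definition nbhdS (D : {set T}) : {set T} := \bigcup_(v in D) nbhd v.

Definition acyclic : Prop :=
  forall s : seq T, uniq s -> 3 <= size s -> ~~ cycle e s.

Definition connected : Prop := forall x y : T, connect e x y.

Definition is_tree : Prop := simple_graph /\ connected /\ acyclic.

Definition leaf (v : T) : bool := #|nbhd v| == 1.

Fixpoint walkb (k : nat) (x y : T) : bool :=
  if k is k'.+1 then [exists z, e x z && walkb k' z y] else x == y.

Definition reach_leaf (k : nat) (v : T) : bool :=
  [exists y, leaf y && walkb k v y].

(* v has height k: the minimum distance from v to a leaf is k
   (the minimum walk length equals the minimum path length = distance) *)
Definition has_height (k : nat) (v : T) : bool :=
  reach_leaf k v && [forall j : 'I_k, ~~ reach_leaf j v].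

Definition Vh (k : nat) : {set T} := [set v | has_height k v].

Definition tree_height (h : nat) : Prop :=
  (exists v, has_height h v) /\ (forall v k, has_height k v -> k <= h).

Definition balanced : Prop :=
  forall u v k, e u v -> has_height k u -> ~~ has_height k v.

Definition TDset (D : {set T}) : bool := nbhdS D == [set: T].

Definition minimal_TDset (D : {set T}) : bool :=
  TDset D && [forall D' : {set T}, (D' \proper D) ==> ~~ TDset D'].

Definition unmixed : Prop :=
  forall D1 D2 : {set T}, minimal_TDset D1 -> minimal_TDset D2 -> #|D1| = #|D2|.

End Graphs.

From mathcomp Require Import all_boot.
Set Implicit Arguments. Unset Strict Implicit. Unset Printing Implicit Defensive.

(* Every minimal TD-set D has exactly 2|V_1| vertices.  D contains V_1, since
   each leaf must be dominated by its unique neighbour, and D has no vertex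
   of height 3: such a vertex would need a private neighbour z of height 2,
   but z is also dominated by its V_1-neighbour.  So every x in D \ V_1 has
   height 0 or 2 and has exactly one neighbour in V_1; sending x to it is a
   bijection onto V_1: injective by hypothesis (2) and privacy of the
   neighbour of a leaf, surjective because a vertex of D dominating s in V_1
   cannot lie in V_1 by balance. *)

Section Heights.
Variables (T : finType) (e : rel T).
Hypothesis e_sym : symmetric e.

Lemma reach_leafS x y k : e x y -> reach_leaf e k y -> reach_leaf e k.+1 x.
Proof.
move=> exy /existsP [z /andP [lz wz]]; apply/existsP; exists z.
by rewrite lz /=; apply/existsP; exists y; rewrite exy.
Qed.

Lemma has_height_uniq v a b : has_height e a v -> has_height e b v -> a = b.
Proof.
wlog leab : a b / a <= b => [wlog_le ha hb|].
  by case: (leqP a b) => [/wlog_le|/ltnW /wlog_le] ->.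
move=> /andP [ra _] /andP [_ /forallP nrb].
case: (ltngtP a b) leab => // ltab _.
by have := nrb (Ordinal ltab); rewrite ra.
Qed.

Lemma has_height_adj x y a b :
  e x y -> has_height e a x -> has_height e b y -> b <= a.+1.
Proof.
move=> exy /andP [ra _] /andP [_ /forallP nrb].
rewrite leqNgt; apply/negP => ltab.
by have := nrb (Ordinal ltab); rewrite /= (@reach_leafS y x) // e_sym.
Qed.

Lemma has_height0 v : has_height e 0 v = leaf e v.
Proof.
apply/idP/idP => [/andP [/existsP [y /andP [ly /eqP ->]] _] //|lv].
rewrite /has_height; apply/andP; split; last by apply/forallP => -[].
by apply/existsP; exists v; rewrite lv /=.
Qed.

Lemma leaf_adj_uniq y a b : leaf e y -> e y a -> e y b -> a = b.
Proof.
move=> /cards1P [c Nc] eya eyb.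
have : a \in nbhd e y by rewrite inE.
have : b \in nbhd e y by rewrite inE.
by rewrite Nc !inE => /eqP -> /eqP ->.
Qed.

Lemma walkb_path p x : path e x p -> walkb e (size p) x (last x p).
Proof.
elim: p x => [|a p IHp] x //= /andP [exa pa].
by apply/existsP; exists a; rewrite exa IHp.
Qed.

Lemma has_height_exists v y :
  connected e -> leaf e y -> exists k, has_height e k v.
Proof.
move=> conn ly.
have reach : exists n, reach_leaf e n v.
  case/connectP: (conn v y) => p pp y_last.
  by exists (size p); apply/existsP; exists y; rewrite ly y_last walkb_path.
case: (ex_minnP reach) => m rm min_m; exists m.
rewrite /has_height rm; apply/forallP => j; apply/negP => rj.
by have := min_m _ rj; rewrite leqNgt ltn_ord.
Qed.

Lemma tree_height_ub h : connected e -> tree_height e h ->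
  forall v, exists2 k, k <= h & has_height e k v.
Proof.
move=> conn [[v0 /andP [/existsP [y /andP [ly _]] _]] ub] v.
by case: (has_height_exists v conn ly) => k hk; exists k => //; apply: ub hk.
Qed.

Lemma leaf_adj_height1 x s :
  balanced e -> leaf e x -> e x s -> has_height e 1 s.
Proof.
move=> bal lx exs; apply/andP; split.
  have /andP [r0x _] : has_height e 0 x by rewrite has_height0.
  by apply: (reach_leafS _ r0x); rewrite e_sym.
apply/forallP => -[[|//] ?]; apply/negP => r0.
have h0 : has_height e 0 s by rewrite /has_height r0; apply/forallP => -[].
by have := bal _ _ 0 exs; rewrite has_height0 lx h0 => /(_ isT).
Qed.

End Heights.

Section TotalDomination.
Variables (T : finType) (e : rel T).
Hypothesis e_sym : symmetric e.

Lemma TDset_adj D z : TDset e D -> exists2 v, v \in D & e v z.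
Proof.
move=> /eqP tdD.
have : z \in nbhdS e D by rewrite tdD inE.
by case/bigcupP => v vD; rewrite inE; exists v.
Qed.

Lemma minimal_TDset_private D x : minimal_TDset e D -> x \in D ->
  exists2 z, e x z & forall v, v \in D -> e v z -> v = x.
Proof.
move=> /andP [tdD /forallP minD] xD.
have : ~~ TDset e (D :\ x) by have := minD (D :\ x); rewrite properD1.
rewrite /TDset eqEsubset subsetT /= => /subsetPn [z _ nz].
have private_z v : v \in D -> e v z -> v = x.
  move=> vD evz; apply/eqP; apply: contraNT nz => vx.
  by apply/bigcupP; exists v; rewrite !inE ?vx.
case: (TDset_adj z tdD) => v vD evz.
by exists z => //; rewrite -(private_z v).
Qed.

Lemma Vh1_sub_TDset D : TDset e D -> Vh e 1 \subset D.
Proof.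
move=> tdD; apply/subsetP => s; rewrite inE.
move=> /andP [/existsP [y /andP [ly /existsP [z /andP [esz /eqP zy]]]] _].
subst z; case: (TDset_adj y tdD) => v vD evy.
by rewrite -(leaf_adj_uniq ly (_ : e y v) (_ : e y s)) // e_sym.
Qed.

End TotalDomination.

Section HeightThree.
Variables (T : finType) (e : rel T).
Hypotheses (e_sym : symmetric e) (bal : balanced e).
Hypothesis height_le3 : forall v, exists2 k, k <= 3 & has_height e k v.
Hypothesis V2_one_V1 : forall u, u \in Vh e 2 -> #|nbhd e u :&: Vh e 1| = 1.
Hypothesis V1_le1_V2 : forall s, s \in Vh e 1 -> #|nbhd e s :&: Vh e 2| <= 1.

Lemma card_nbhd_Vh1 x : has_height e 0 x || has_height e 2 x ->
  #|nbhd e x :&: Vh e 1| = 1.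
Proof.
case/orP => [|h2]; last by apply: V2_one_V1; rewrite inE.
rewrite has_height0 => lx; case/cards1P: (lx) => c Nc.
have : c \in nbhd e x by rewrite Nc set11.
rewrite inE => exc.
rewrite Nc (setIidPl _) ?cards1 //; apply/subsetP => y; rewrite !inE => /eqP ->.
exact: leaf_adj_height1 lx exc.
Qed.

Definition V1_adj x := odflt x [pick s in nbhd e x :&: Vh e 1].

Lemma V1_adjP x : has_height e 0 x || has_height e 2 x ->
  forall s, (e x s && (s \in Vh e 1)) = (s == V1_adj x).
Proof.
move/card_nbhd_Vh1/eqP/cards1P => [c Nc] s.
have -> : e x s && (s \in Vh e 1) = (s \in nbhd e x :&: Vh e 1).
  by rewrite !inE.
rewrite Nc inE /V1_adj.
case: pickP => [y|/(_ c)]; last by rewrite Nc inE eqxx.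
by rewrite Nc inE => /eqP ->.
Qed.

Lemma V1_adj_spec x : has_height e 0 x || has_height e 2 x ->
  e x (V1_adj x) && (V1_adj x \in Vh e 1).
Proof. by move=> hx; rewrite V1_adjP. Qed.

Section MinimalTDset.
Variable D : {set T}.
Hypothesis minD : minimal_TDset e D.

Let tdD : TDset e D. Proof. by case/andP: minD. Qed.

Lemma minimal_TDset_no_height3 w : w \in D -> ~~ has_height e 3 w.
Proof.
move=> wD; apply/negP => h3.
case: (minimal_TDset_private minD wD) => z ewz private_z.
case: (height_le3 z) => k k_le3 hk.
have k_ge2 : 2 <= k by apply: (has_height_adj e_sym _ hk h3); rewrite e_sym.
have k_ne3 : k != 3 by apply: contraNneq (bal ewz h3) => <-.
have {k_le3 k_ge2 k_ne3 hk} h2 : has_height e 2 z.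
  by case: k k_le3 k_ge2 k_ne3 hk => [|[|[|[|]]]].
have /andP [ezs s1] : e z (V1_adj z) && (V1_adj z \in Vh e 1).
  by apply: V1_adj_spec; rewrite h2 orbT.
have sD : V1_adj z \in D by apply: (subsetP (Vh1_sub_TDset e_sym tdD)).
have sw : V1_adj z = w by apply: private_z; rewrite // e_sym.
by rewrite inE sw in s1; have := has_height_uniq s1 h3.
Qed.

Lemma minimal_TDset_low x : x \in D :\: Vh e 1 ->
  has_height e 0 x || has_height e 2 x.
Proof.
rewrite !inE => /andP [x_notV1 xD].
have x_not3 := minimal_TDset_no_height3 xD.
case: (height_le3 x) => -[|[|[|[|]]]] // _ hx.
- by rewrite hx.
- by rewrite hx in x_notV1.
- by rewrite hx orbT.
- by rewrite hx in x_not3.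
Qed.

Lemma V1_adj_leaf x x' : x \in D :\: Vh e 1 -> x' \in D :\: Vh e 1 ->
  leaf e x -> V1_adj x = V1_adj x' -> x' = x.
Proof.
move=> xD' x'D' lx sx; case/setDP: (xD') => xD _.
case: (minimal_TDset_private minD xD) => z exz private_z.
case/andP: (V1_adj_spec (minimal_TDset_low xD')) => exs _.
case/andP: (V1_adj_spec (minimal_TDset_low x'D')) => ex's _.
apply: private_z; first by case/setDP: x'D'.
by rewrite (leaf_adj_uniq lx exz exs) sx.
Qed.

Lemma V1_adj_inj : {in D :\: Vh e 1 &, injective V1_adj}.
Proof.
move=> x x' xD' x'D' sx.
case/orP: (minimal_TDset_low xD') => [|h2x].
  by rewrite has_height0 => lx; rewrite (V1_adj_leaf xD' x'D').
case/orP: (minimal_TDset_low x'D') => [|h2x'].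
  by rewrite has_height0 => lx'; rewrite (V1_adj_leaf x'D' xD').
case/andP: (V1_adj_spec (minimal_TDset_low xD')) => exs s1.
case/andP: (V1_adj_spec (minimal_TDset_low x'D')); rewrite -sx => ex's _.
apply/(card_le1_eqP (V1_le1_V2 s1)).
  by rewrite !inE e_sym ex's.
by rewrite !inE e_sym exs.
Qed.

Lemma V1_adj_onto : V1_adj @: (D :\: Vh e 1) = Vh e 1.
Proof.
apply/setP => s; apply/imsetP/idP => [[x xD' ->]|s1].
  by case/andP: (V1_adj_spec (minimal_TDset_low xD')).
case: (TDset_adj s tdD) => v vD evs.
have vD' : v \in D :\: Vh e 1.
  rewrite !inE vD andbT; apply: contraL s1 => v1.
  by rewrite inE (bal evs v1).
by exists v => //; apply/eqP; rewrite -V1_adjP ?minimal_TDset_low // evs s1.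
Qed.

Lemma card_minimal_TDset : #|D| = 2 * #|Vh e 1|.
Proof.
have card_low : #|D :\: Vh e 1| = #|Vh e 1|.
  by rewrite -{2}V1_adj_onto (card_in_imset V1_adj_inj).
rewrite -(cardsID (Vh e 1) D) (setIidPr (Vh1_sub_TDset e_sym tdD)).
by rewrite card_low addnn mul2n.
Qed.

End MinimalTDset.
End HeightThree.

Theorem theorem3p36 (T : finType) (e : rel T) :
  is_tree e -> balanced e -> tree_height e 3 ->
  (forall u, u \in Vh e 2 -> #|nbhd e u :&: Vh e 1| = 1) ->
  (forall s, s \in Vh e 1 -> #|nbhd e s :&: Vh e 2| <= 1) ->
  unmixed e.
Proof.
move=> [[e_sym _] [conn _]] bal h3 V2_one_V1 V1_le1_V2 D1 D2 minD1 minD2.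
have card_min := card_minimal_TDset e_sym bal (tree_height_ub conn h3)
  V2_one_V1 V1_le1_V2.
by rewrite (card_min D1) // (card_min D2).
Qed.
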